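(* The flat braid group $\mathrm{FB}_7$ is (abstractly) commensurable to the right-angled Artin group $A(P_4)$, i.e.\ they contain isomorphic finite-index subgroups.
   Context: $\mathrm{FB}_7=\langle \sigma_1,\ldots,\sigma_6\mid \sigma_i^2=1,\ [\sigma_i,\sigma_j]=1 \text{ whenever } |i-j|\ge 2\rangle$. $P_4$ denotes the path of length $4$ (five vertices $v_0,\dots,v_4$, with $v_i$ adjacent to $v_{i+1}$), and $A(P_4)=\langle v_0,\ldots,v_4\mid [v_i,v_{i+1}]=1,\ 0\le i\le 3\rangle$ is the corresponding right-angled Artin group. *)

(* Finitely presented groups are modelled concretely:
   elements are words in the generators and their inverses, and equality in the
   group is the congruence generated by free cancellation and the relators.   *)
From Stdlib Require Import List.
From mathcomp Require Import all_boot.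
Set Implicit Arguments. Unset Strict Implicit. Unset Printing Implicit Defensive.

(* A letter: (generator, inv) ; inv = true means the inverse of the generator. *)
Definition word (X : Type) := seq (X * bool).

Definition letter_inv (X : Type) (a : X * bool) : X * bool := (a.1, ~~ a.2).
Definition word_inv (X : Type) (w : word X) : word X := rev (map (@letter_inv X) w).

Inductive peq (X : Type) (R : word X -> Prop) : word X -> word X -> Prop :=
| peq_refl u : peq R u u
| peq_sym u v : peq R u v -> peq R v u
| peq_trans u v w : peq R u v -> peq R v w -> peq R u w
| peq_free (a b : word X) (x : X * bool) :
    peq R (a ++ x :: letter_inv x :: b) (a ++ b)
| peq_rel (a b r : word X) : R r -> peq R (a ++ r ++ b) (a ++ b).

Definition is_subgroup (X : Type) (R : word X -> Prop) (H : word X -> Prop) : Prop :=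
  [/\ (forall u v, peq R u v -> H u -> H v),
      H [::],
      (forall u v, H u -> H v -> H (u ++ v)) &
      (forall u, H u -> H (word_inv u))].

Definition finite_index (X : Type) (R : word X -> Prop) (H : word X -> Prop) : Prop :=
  exists T : seq (word X), forall g : word X,
    exists2 t, In t T & exists h, H h /\ peq R g (h ++ t).

Definition subgroup_iso (X1 X2 : Type) (R1 : word X1 -> Prop) (R2 : word X2 -> Prop)
    (H1 : word X1 -> Prop) (H2 : word X2 -> Prop) (f : word X1 -> word X2) : Prop :=
  [/\ (forall u, H1 u -> H2 (f u)),
      (forall u v, H1 u -> H1 v -> peq R1 u v -> peq R2 (f u) (f v)),
      (forall u v, H1 u -> H1 v -> peq R2 (f (u ++ v)) (f u ++ f v)),
      (forall u v, H1 u -> H1 v -> peq R2 (f u) (f v) -> peq R1 u v) &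
      (forall w, H2 w -> exists u, H1 u /\ peq R2 (f u) w)].

Definition commensurable (X1 X2 : Type) (R1 : word X1 -> Prop) (R2 : word X2 -> Prop)
  : Prop :=
  exists (H1 : word X1 -> Prop) (H2 : word X2 -> Prop) (f : word X1 -> word X2),
    [/\ is_subgroup R1 H1, finite_index R1 H1, is_subgroup R2 H2,
        finite_index R2 H2 & subgroup_iso R1 R2 H1 H2 f].

Definition gen (X : Type) (x : X) : X * bool := (x, false).
Definition ginv (X : Type) (x : X) : X * bool := (x, true).
Definition commutator_word (X : Type) (x y : X) : word X :=
  [:: gen x; gen y; ginv x; ginv y].

(* FB_7: generators sigma_1..sigma_6, encoded as i : 'I_6 (sigma_{i+1}). *)
Definition FB7_rel (w : word 'I_6) : Prop :=
  (exists i : 'I_6, w = [:: gen i; gen i]) \/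
  (exists i j : 'I_6, (i.+2 <= j \/ j.+2 <= i) /\ w = commutator_word i j).

Definition AP4_rel (w : word 'I_5) : Prop :=
  exists i j : 'I_5, val j = (val i).+1 /\ w = commutator_word i j.

(* The assignment sigma_1, sigma_2 |-> e_1, sigma_3 |-> e_2, sigma_4, sigma_5 |-> e_3,
   sigma_6 |-> e_4 kills every relator of FB_7, so it defines an epimorphism
   FB_7 -> (Z/2)^4 whose kernel K has index 16.  K is isomorphic to A(P_4):
   explicit words P_0, ..., P_4 of K satisfy the relations of A(P_4), and the
   Reidemeister-Schreier rewriting of K along the transversal of products of
   sigma_1, sigma_3, sigma_4, sigma_6 is a homomorphism K -> A(P_4) sending P_k
   to v_k and inverse to v_k |-> P_k.  Each of these facts reduces to finitely
   many word problems in FB_7 or A(P_4), which are right-angled groups and are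
   solved by commuting letters past each other and cancelling. *)

From mathcomp Require Import all_boot zmodp.
Set Implicit Arguments. Unset Strict Implicit. Unset Printing Implicit Defensive.

Lemma In_map_mem (T : eqType) (U : Type) (f : T -> U) (x : T) (s : seq T) :
  x \in s -> List.In (f x) (map f s).
Proof. by elim: s => //= y s IH; rewrite in_cons => /predU1P [->|/IH]; [left | right]. Qed.

Section WordInverse.
Variable X : Type.

Lemma letter_invK : involutive (@letter_inv X).
Proof. by case=> x b; rewrite /letter_inv /= negbK. Qed.

Lemma word_inv_cat (u v : word X) : word_inv (u ++ v) = word_inv v ++ word_inv u.
Proof. by rewrite /word_inv map_cat rev_cat. Qed.

Lemma word_inv_cons (x : X * bool) (w : word X) :
  word_inv (x :: w) = word_inv w ++ [:: letter_inv x].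
Proof. by rewrite /word_inv /= rev_cons cats1. Qed.

Lemma word_invK : involutive (@word_inv X).
Proof. by move=> w; rewrite /word_inv map_rev revK -map_comp (eq_map letter_invK) map_id. Qed.

End WordInverse.

Section PresentationEquality.
Variables (X : Type) (R : word X -> Prop).

Lemma peq_ctx (a b u v : word X) : peq R u v -> peq R (a ++ u ++ b) (a ++ v ++ b).
Proof.
elim=> {u v} [u | u v _ | u v w _ IHuv _ | a' b' x | a' b' r Rr].
- exact: peq_refl.
- exact: peq_sym.
- exact: peq_trans.
- by have := peq_free R (a ++ a') (b' ++ b) x; rewrite -!catA.
- by have := peq_rel (a ++ a') (b' ++ b) Rr; rewrite -!catA.
Qed.

Lemma peq_cat (u v u' v' : word X) :
  peq R u u' -> peq R v v' -> peq R (u ++ v) (u' ++ v').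
Proof.
move=> uu' vv'; apply: (@peq_trans _ _ _ (u' ++ v)).
  by have := peq_ctx [::] v uu'.
by have := peq_ctx u' [::] vv'; rewrite !cats0.
Qed.

Lemma peq_cancel (w : word X) : peq R (w ++ word_inv w) [::].
Proof.
elim: w => [|x w IH]; first exact: peq_refl.
rewrite word_inv_cons /= catA.
apply: peq_trans (peq_ctx [:: x] [:: letter_inv x] IH) _.
exact: (peq_free R [::] [::] x).
Qed.

Lemma peq_cancel_inv (w : word X) : peq R (word_inv w ++ w) [::].
Proof. by have := peq_cancel (word_inv w); rewrite word_invK. Qed.

Lemma peq_relator (r : word X) : R r -> peq R r [::].
Proof. by move=> Rr; have := peq_rel [::] [::] Rr; rewrite /= cats0. Qed.

Lemma peq_inv (u v : word X) : peq R u v -> peq R (word_inv u) (word_inv v).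
Proof.
elim=> {u v} [u | u v _ | u v w _ IHuv _ | a b x | a b r Rr].
- exact: peq_refl.
- exact: peq_sym.
- exact: peq_trans.
- rewrite !word_inv_cat !word_inv_cons letter_invK -!catA /=.
  exact: (peq_free R _ _ x).
- have r_nil : peq R (word_inv r) [::].
    apply: peq_trans (peq_cancel_inv r); apply: peq_sym.
    by have := peq_cat (peq_refl R (word_inv r)) (peq_relator Rr); rewrite cats0.
  by rewrite !word_inv_cat -catA; have := peq_ctx (word_inv b) (word_inv a) r_nil.
Qed.

Lemma peq_nil_rot (r1 r2 : word X) : peq R (r1 ++ r2) [::] -> peq R (r2 ++ r1) [::].
Proof.
move=> r12; apply: peq_trans (peq_cancel r2).
apply: (@peq_trans _ _ _ (r2 ++ (r1 ++ r2) ++ word_inv r2)).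
  by rewrite -catA; have := peq_ctx (r2 ++ r1) [::] (peq_sym (peq_cancel r2)); rewrite !cats0 -catA.
by have := peq_ctx r2 (word_inv r2) r12.
Qed.

Lemma peq_nil_rotk k (r : word X) : peq R r [::] -> peq R (rot k r) [::].
Proof. by move=> r_nil; apply: peq_nil_rot; rewrite cat_take_drop. Qed.

Lemma peq_of_nil (u v : word X) : peq R (u ++ word_inv v) [::] -> peq R u v.
Proof.
move=> uv; apply: (@peq_trans _ _ _ (u ++ word_inv v ++ v)).
  by have := peq_ctx u [::] (peq_sym (peq_cancel_inv v)); rewrite !cats0.
by rewrite catA; have := peq_ctx [::] v uv.
Qed.

End PresentationEquality.

Section WordProblem.
Variables (X : eqType) (R : word X -> Prop) (rs : seq (word X)).
Hypothesis rs_rel : forall r, r \in rs -> R r.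

Definition rotations (r : word X) : seq (word X) := [seq rot k r | k <- iota 0 (size r)].

Definition free_pair (c : word X) : bool :=
  if c is [:: x; y] then y == letter_inv x else false.

Definition elementary (c : word X) : bool :=
  free_pair c || has (fun r => (c \in rotations r) || (c \in rotations (word_inv r))) rs.

Lemma elementary_peq (c : word X) : elementary c -> peq R c [::].
Proof.
case/orP=> [|/hasP [r /rs_rel Rr /orP []] /mapP [k _ ->]].
- by case: c => [|x [|y []]] //= /eqP ->; apply: (peq_free R [::] [::] x).
- exact/peq_nil_rotk/peq_relator.
- exact/peq_nil_rotk/(peq_inv (peq_relator Rr)).
Qed.

Definition commuting (x y : X * bool) : bool :=
  elementary [:: x; y; letter_inv x; letter_inv y].

(* Greedy cancellation of a letter against a later partner, across letters that
   commute with it: this solves the word problem in right-angled Artin and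
   Coxeter groups, but only its soundness is needed. *)
Fixpoint cancel_partner (x : X * bool) (s : word X) : option (word X) :=
  if s is y :: s' then
    if elementary [:: x; y] then Some s'
    else if commuting x y then omap (cons y) (cancel_partner x s') else None
  else None.

Lemma cancel_partner_peq x s s' : cancel_partner x s = Some s' -> peq R (x :: s) s'.
Proof.
elim: s s' => [|y s IH] s' //=.
case: ifP => [xy [<-] | _]; first by have := peq_ctx [::] s (elementary_peq xy).
case: ifP => // xy; case E: (cancel_partner x s) => [t|] //= [<-].
apply: (@peq_trans _ _ _ (y :: x :: s)).
  by have := peq_ctx [::] s (@peq_of_nil _ R [:: x; y] [:: y; x] (elementary_peq xy)).
by have := peq_ctx [:: y] [::] (IH _ E); rewrite !cats0.
Qed.

Fixpoint cancel_step (w : word X) : option (word X) :=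
  if w is x :: w' then
    if cancel_partner x w' is Some s then Some s else omap (cons x) (cancel_step w')
  else None.

Lemma cancel_step_peq w w' : cancel_step w = Some w' -> peq R w w'.
Proof.
elim: w w' => [|x w IH] w' //=.
case E: (cancel_partner x w) => [s|]; first by case=> <-; exact: cancel_partner_peq.
case: (cancel_step w) IH => [t|] IH //= [<-].
by have := peq_ctx [:: x] [::] (IH _ erefl); rewrite !cats0.
Qed.

Fixpoint reduce (n : nat) (w : word X) : word X :=
  if n is n'.+1 then if cancel_step w is Some w' then reduce n' w' else w else w.

Lemma reduce_peq n w : peq R w (reduce n w).
Proof.
elim: n w => [|n IH] w /=; first exact: peq_refl.
case E: (cancel_step w) => [w'|]; last exact: peq_refl.
exact: peq_trans (cancel_step_peq E) (IH w').
Qed.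

(* Each successful step removes two letters, so [size w] steps suffice. *)
Definition word_eqb (u v : word X) : bool :=
  let w := u ++ word_inv v in reduce (size w) w == [::].

Lemma word_eqb_peq u v : word_eqb u v -> peq R u v.
Proof. by move/eqP=> red; apply: peq_of_nil; rewrite -red; apply: reduce_peq. Qed.

End WordProblem.

Section SchreierCriterion.
Variables (X Y : Type) (R : word X -> Prop) (S : word Y -> Prop).
Variables (C : finType) (c0 : C) (act : C -> X * bool -> C).
Variables (lab : C -> X * bool -> word Y) (tr : C -> word X) (img : Y -> word X).

Definition endpoint (c : C) (w : word X) : C := foldl act c w.

Fixpoint rewrite_path (c : C) (w : word X) : word Y :=
  if w is x :: w' then lab c x ++ rewrite_path (act c x) w' else [::].

Definition img_letter (y : Y * bool) : word X :=
  if y.2 then word_inv (img y.1) else img y.1.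

Definition img_word (w : word Y) : word X := flatten (map img_letter w).

(* [act] is an action of < X | R > on [C] (by [relator_loop]), [tr c] represents
   the coset [c], and [lab c x] is a preimage under [img_word] of the Schreier
   generator [tr c x (tr (c x))^-1].  Then [rewrite_path c0] is the
   Reidemeister-Schreier rewriting of the stabiliser of [c0], inverse to [img_word]. *)
Hypothesis act_letter_inv : forall c x, act (act c x) (letter_inv x) = c.
Hypothesis lab_letter_inv : forall c x, lab (act c x) (letter_inv x) = word_inv (lab c x).
Hypothesis relator_loop :
  forall c r, R r -> endpoint c r = c /\ peq S (rewrite_path c r) [::].
Hypothesis img_relator : forall r, S r -> peq R (img_word r) [::].
Hypothesis endpoint_img : forall y, endpoint c0 (img y) = c0.
Hypothesis rewrite_img : forall y, peq S (rewrite_path c0 (img y)) [:: gen y].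
Hypothesis img_lab :
  forall c x, peq R (img_word (lab c x)) (tr c ++ x :: word_inv (tr (act c x))).
Hypothesis tr_base : tr c0 = [::].

Lemma endpoint_cat c u v : endpoint c (u ++ v) = endpoint (endpoint c u) v.
Proof. exact: foldl_cat. Qed.

Lemma rewrite_path_cat c u v :
  rewrite_path c (u ++ v) = rewrite_path c u ++ rewrite_path (endpoint c u) v.
Proof. by elim: u c => //= x u IH c; rewrite IH catA. Qed.

Lemma endpoint_inv c w : endpoint (endpoint c w) (word_inv w) = c.
Proof.
by elim: w c => // x w IH c; rewrite word_inv_cons endpoint_cat /= IH act_letter_inv.
Qed.

Lemma rewrite_path_inv c w :
  rewrite_path (endpoint c w) (word_inv w) = word_inv (rewrite_path c w).
Proof.
elim: w c => // x w IH c.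
by rewrite word_inv_cons rewrite_path_cat /= IH endpoint_inv word_inv_cat cats0 lab_letter_inv.
Qed.

Lemma rewrite_path_peq u v : peq R u v ->
  forall c, endpoint c u = endpoint c v /\ peq S (rewrite_path c u) (rewrite_path c v).
Proof.
elim=> {u v} [u | u v _ IH | u v w _ IHuv _ IHvw | a b x | a b r Rr] c.
- by split=> //; apply: peq_refl.
- by have [-> vu] := IH c; split=> //; apply: peq_sym.
- have [-> uv] := IHuv c; have [-> vw] := IHvw c; split=> //; exact: peq_trans uv vw.
- rewrite !endpoint_cat !rewrite_path_cat /= act_letter_inv lab_letter_inv catA; split=> //.
  have := peq_cancel S (lab (endpoint c a) x).
  by move/(peq_ctx (rewrite_path c a) (rewrite_path (endpoint c a) b)); rewrite -!catA.
- rewrite !endpoint_cat !rewrite_path_cat.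
  have [-> r_nil] := relator_loop (endpoint c a) Rr; split=> //.
  by have := peq_ctx (rewrite_path c a) (rewrite_path (endpoint c a) b) r_nil.
Qed.

Lemma img_word_cat u v : img_word (u ++ v) = img_word u ++ img_word v.
Proof. by rewrite /img_word map_cat flatten_cat. Qed.

Lemma img_word_cons y w : img_word (y :: w) = img_letter y ++ img_word w.
Proof. by []. Qed.

Lemma img_letter_inv y : img_letter (letter_inv y) = word_inv (img_letter y).
Proof. by case: y => y [] /=; rewrite /img_letter /= ?word_invK. Qed.

Lemma img_word_inv w : img_word (word_inv w) = word_inv (img_word w).
Proof.
elim: w => // y w IH.
by rewrite word_inv_cons img_word_cat IH !img_word_cons cats0 img_letter_inv word_inv_cat.
Qed.

Lemma img_word_peq u v : peq S u v -> peq R (img_word u) (img_word v).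
Proof.
elim=> {u v} [u | u v _ | u v w _ IHuv _ | a b y | a b r Sr].
- exact: peq_refl.
- exact: peq_sym.
- exact: peq_trans.
- rewrite !img_word_cat !img_word_cons img_letter_inv catA.
  by have := peq_ctx (img_word a) (img_word b) (peq_cancel R (img_letter y)); rewrite -!catA.
- by rewrite !img_word_cat; have := peq_ctx (img_word a) (img_word b) (img_relator Sr).
Qed.

Lemma endpoint_img_letter y : endpoint c0 (img_letter y) = c0.
Proof.
case: y => y [] /=; rewrite /img_letter /=; last exact: endpoint_img.
by rewrite -{1}(endpoint_img y) endpoint_inv.
Qed.

Lemma endpoint_img_word w : endpoint c0 (img_word w) = c0.
Proof. by elim: w => // y w IH; rewrite img_word_cons endpoint_cat endpoint_img_letter. Qed.

Lemma rewrite_img_letter y : peq S (rewrite_path c0 (img_letter y)) [:: y].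
Proof.
case: y => y [] /=; rewrite /img_letter /=; last exact: rewrite_img.
by rewrite -{1}(endpoint_img y) rewrite_path_inv; apply: (peq_inv (rewrite_img y)).
Qed.

Lemma rewrite_img_word w : peq S (rewrite_path c0 (img_word w)) w.
Proof.
elim: w => [|y w IH]; first exact: peq_refl.
rewrite img_word_cons rewrite_path_cat endpoint_img_letter.
exact: peq_cat (rewrite_img_letter y) IH.
Qed.

Lemma img_rewrite_path c w :
  peq R (img_word (rewrite_path c w)) (tr c ++ w ++ word_inv (tr (endpoint c w))).
Proof.
elim: w c => [|x w IH] c /=; first exact: peq_sym (peq_cancel R (tr c)).
rewrite img_word_cat; apply: peq_trans (peq_cat (img_lab c x) (IH (act c x))) _.
have := peq_ctx (tr c ++ [:: x]) (w ++ word_inv (tr (endpoint (act c x) w)))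
  (peq_cancel_inv R (tr (act c x))).
by rewrite -!catA.
Qed.

Definition img_subgroup (u : word X) : Prop := exists a, peq R u (img_word a).

Lemma img_subgroupP : is_subgroup R img_subgroup.
Proof.
split.
- by move=> u v uv [a ua]; exists a; exact: peq_trans (peq_sym uv) ua.
- by exists [::]; apply: peq_refl.
- by move=> u v [a ua] [b vb]; exists (a ++ b); rewrite img_word_cat; apply: peq_cat.
- by move=> u [a ua]; exists (word_inv a); rewrite img_word_inv; apply: peq_inv.
Qed.

Lemma img_subgroup_finite_index : finite_index R img_subgroup.
Proof.
exists (map tr (enum C)) => g; exists (tr (endpoint c0 g)).
  by apply: In_map_mem; rewrite mem_enum.
exists (img_word (rewrite_path c0 g)); split; first by exists (rewrite_path c0 g); apply: peq_refl.
apply: peq_sym; apply: peq_trans (peq_cat (img_rewrite_path c0 g) (peq_refl R _)) _.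
rewrite tr_base /= -catA.
by have := peq_ctx g [::] (peq_cancel_inv R (tr (endpoint c0 g))); rewrite !cats0.
Qed.

Lemma endpoint_img_subgroup u : img_subgroup u -> endpoint c0 u = c0.
Proof. by case=> a ua; have [-> _] := rewrite_path_peq ua c0; apply: endpoint_img_word. Qed.

Lemma img_rewrite_loop u : endpoint c0 u = c0 -> peq R (img_word (rewrite_path c0 u)) u.
Proof. by move=> loop; have := img_rewrite_path c0 u; rewrite loop tr_base cats0. Qed.

Lemma rewrite_path_iso : subgroup_iso R S img_subgroup (fun=> True) (rewrite_path c0).
Proof.
split=> //.
- by move=> u v _ _ /rewrite_path_peq /(_ c0) [].
- by move=> u v /endpoint_img_subgroup loop _; rewrite rewrite_path_cat loop; apply: peq_refl.
- move=> u v /endpoint_img_subgroup loop_u /endpoint_img_subgroup loop_v /img_word_peq uv.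
  exact: peq_trans (peq_sym (img_rewrite_loop loop_u)) (peq_trans uv (img_rewrite_loop loop_v)).
- move=> w _; exists (img_word w); split; last exact: rewrite_img_word.
  by exists w; apply: peq_refl.
Qed.

Theorem schreier_commensurable : commensurable R S.
Proof.
exists img_subgroup, (fun=> True), (rewrite_path c0); split.
- exact: img_subgroupP.
- exact: img_subgroup_finite_index.
- by split.
- exists [:: [::]] => g; exists [::]; first by left.
  by exists g; rewrite cats0; split=> //; apply: peq_refl.
- exact: rewrite_path_iso.
Qed.

End SchreierCriterion.

(* [enum 'I_n] does not reduce under [vm_compute] (it goes through the opaque
   [idP]), hence this enumeration. *)
Definition ords (n : nat) : seq 'I_n.+1 := map inZp (iota 0 n.+1).

Lemma mem_ords n (i : 'I_n.+1) : i \in ords n.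
Proof. by apply/mapP; exists (val i); [rewrite mem_iota ltn_ord | rewrite valZpK]. Qed.

Lemma all_ordsP n (p : pred 'I_n.+1) : all p (ords n) -> forall i, p i.
Proof. by move/allP=> allp i; apply/allp/mem_ords. Qed.

Definition ord_pairs (n : nat) : seq ('I_n.+1 * 'I_n.+1) :=
  [seq (i, j) | i <- ords n, j <- ords n].

Definition FB7_relators : seq (word 'I_6) :=
  [seq [:: gen i; gen i] | i <- ords 5] ++
  [seq commutator_word p.1 p.2 | p : 'I_6 * 'I_6 <- ord_pairs 5 & p.1.+2 <= p.2].

Lemma FB7_relators_rel r : r \in FB7_relators -> FB7_rel r.
Proof.
rewrite mem_cat => /orP [/mapP [i _ ->] | /mapP [[i j]]]; first by left; exists i.
by rewrite mem_filter => /andP [ij _] ->; right; exists i, j; split=> //; left.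
Qed.

Definition AP4_relators : seq (word 'I_5) :=
  [seq commutator_word p.1 p.2 | p : 'I_5 * 'I_5 <- ord_pairs 4 & val p.2 == (val p.1).+1].

Lemma AP4_relators_rel r : r \in AP4_relators -> AP4_rel r.
Proof. by case/mapP=> [[i j]]; rewrite mem_filter => /andP [/eqP ij _] ->; exists i, j. Qed.

(* [c : 'I_16] is the vector of (Z/2)^4 whose coordinates are the binary digits
   of [c]; [sigma_bit i] is the coordinate changed by sigma_(i+1), and the coset
   representative of [c] multiplies sigma_1, sigma_3, sigma_4, sigma_6 over the
   nonzero digits. *)
Definition sigma_bit (i : 'I_6) : nat := nth 0 [:: 0; 0; 1; 2; 2; 3] i.

Definition toggle_bit (k c : nat) : nat :=
  if odd (c %/ 2 ^ k) then c - 2 ^ k else c + 2 ^ k.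

Definition coset_act (c : 'I_16) (x : 'I_6 * bool) : 'I_16 := inZp (toggle_bit (sigma_bit x.1) c).

Definition coset_rep (c : 'I_16) : word 'I_6 :=
  [seq gen (inZp (nth 0 [:: 0; 2; 3; 5] k)) | k <- iota 0 4 & odd (c %/ 2 ^ k)].

(* Entry [c], [i] is the A(P_4)-word [lab c sigma_(i+1)] of the criterion, the
   letter [(k, b)] standing for v_k, inverted when [b]; row [k] of [vertex_table]
   is P_k, listing the 1-based indices of its sigma's. *)
Definition label_table : seq (seq (seq (nat * bool))) := [::
  [:: [::]; [:: (1, true)]; [::]; [::]; [:: (0, true)]; [::]];
  [:: [::]; [:: (1, false)]; [::]; [::]; [:: (0, true)]; [::]];
  [:: [::]; [:: (3, true)]; [::]; [::]; [:: (4, true)]; [::]];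
  [:: [::]; [:: (3, false)]; [::]; [::]; [:: (4, true)]; [::]];
  [:: [::]; [:: (1, true)]; [:: (0, false); (4, true)]; [::]; [:: (0, false)]; [::]];
  [:: [::]; [:: (1, false)]; [:: (0, false); (4, true)]; [::]; [:: (0, false)]; [::]];
  [:: [::]; [:: (3, true)]; [:: (4, false); (0, true)]; [::]; [:: (4, false)]; [::]];
  [:: [::]; [:: (3, false)]; [:: (4, false); (0, true)]; [::]; [:: (4, false)]; [::]];
  [:: [::]; [:: (1, true)]; [::]; [::]; [:: (2, true); (0, true)]; [::]];
  [:: [::]; [:: (1, false)]; [::]; [::]; [:: (2, true); (0, true)]; [::]];
  [:: [::]; [:: (3, true)]; [::]; [::]; [:: (2, true); (4, true)]; [::]];
  [:: [::]; [:: (3, false)]; [::]; [::]; [:: (2, true); (4, true)]; [::]];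
  [:: [::]; [:: (1, true)]; [:: (0, false); (4, true)]; [::]; [:: (0, false); (2, false)]; [::]];
  [:: [::]; [:: (1, false)]; [:: (0, false); (4, true)]; [::]; [:: (0, false); (2, false)]; [::]];
  [:: [::]; [:: (3, true)]; [:: (4, false); (0, true)]; [::]; [:: (4, false); (2, false)]; [::]];
  [:: [::]; [:: (3, false)]; [:: (4, false); (0, true)]; [::]; [:: (4, false); (2, false)]; [::]]].

Definition vertex_table : seq (seq nat) := [::
  [:: 4; 5];
  [:: 1; 4; 6; 2; 6; 4];
  [:: 5; 6; 5; 6];
  [:: 1; 3; 4; 6; 2; 6; 4; 3];
  [:: 3; 4; 6; 3; 6; 5]].

Definition schreier_label_gen (c : 'I_16) (i : 'I_6) : word 'I_5 :=
  [seq (inZp p.1, p.2) | p <- nth [::] (nth [::] label_table c) i].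

Definition schreier_label (c : 'I_16) (x : 'I_6 * bool) : word 'I_5 :=
  if x.2 then word_inv (schreier_label_gen (coset_act c x) x.1)
  else schreier_label_gen c x.1.

Definition vertex_word (k : 'I_5) : word 'I_6 :=
  [seq gen (inZp i.-1) | i <- nth [::] vertex_table k].

Local Notation coset_endpoint := (endpoint coset_act).
Local Notation rewrite_FB7 := (rewrite_path coset_act schreier_label).
Local Notation embed_AP4 := (img_word vertex_word).
Local Notation eqb_FB7 := (word_eqb FB7_relators).
Local Notation eqb_AP4 := (word_eqb AP4_relators).

Lemma coset_act_letter_inv c x : coset_act (coset_act c x) (letter_inv x) = c.
Proof.
have check : all (fun c => all (fun i =>
  coset_act (coset_act c (i, false)) (i, true) == c) (ords 5)) (ords 15) by vm_compute.
by apply/eqP; have := all_ordsP (all_ordsP check c) x.1; rewrite /coset_act; case: x.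
Qed.

Lemma schreier_label_letter_inv c x :
  schreier_label (coset_act c x) (letter_inv x) = word_inv (schreier_label c x).
Proof.
case: x => i [] /=; rewrite /schreier_label /= ?word_invK //.
by rewrite (coset_act_letter_inv c (i, false)).
Qed.

Definition lifts_to_trivial_loop (c : 'I_16) (r : word 'I_6) : bool :=
  (coset_endpoint c r == c) && eqb_AP4 (rewrite_FB7 c r) [::].

Lemma FB7_relator_loop c r : FB7_rel r ->
  coset_endpoint c r = c /\ peq AP4_rel (rewrite_FB7 c r) [::].
Proof.
have check : all (fun c => all (fun i : 'I_6 => all (fun j : 'I_6 =>
    lifts_to_trivial_loop c [:: gen i; gen i] &&
    ((i.+2 <= j) || (j.+2 <= i) ==> lifts_to_trivial_loop c (commutator_word i j)))
  (ords 5)) (ords 5)) (ords 15) by vm_compute.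
move=> Rr; suff /andP [/eqP loop /(word_eqb_peq AP4_relators_rel) r_nil] :
    lifts_to_trivial_loop c r.
  by split.
have lifts i j := all_ordsP (all_ordsP (all_ordsP check c) i) j.
case: Rr => [[i ->] | [i [j [ij ->]]]]; first by case/andP: (lifts i i).
by case/andP: (lifts i j) => _ /implyP; apply; case: ij => ->; rewrite ?orbT.
Qed.

Lemma embed_AP4_relator r : AP4_rel r -> peq FB7_rel (embed_AP4 r) [::].
Proof.
have check : all (fun i : 'I_5 => all (fun j : 'I_5 =>
    (val j == (val i).+1) ==> eqb_FB7 (embed_AP4 (commutator_word i j)) [::])
  (ords 4)) (ords 4) by vm_compute.
case=> i [j [ij ->]]; apply: (word_eqb_peq FB7_relators_rel).
by have /implyP := all_ordsP (all_ordsP check i) j; apply; apply/eqP.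
Qed.

Lemma vertex_word_loop k : coset_endpoint ord0 (vertex_word k) = ord0 /\
  peq AP4_rel (rewrite_FB7 ord0 (vertex_word k)) [:: gen k].
Proof.
have check : all (fun k : 'I_5 => (coset_endpoint ord0 (vertex_word k) == ord0) &&
  eqb_AP4 (rewrite_FB7 ord0 (vertex_word k)) [:: gen k]) (ords 4) by vm_compute.
by have /andP [/eqP -> /(word_eqb_peq AP4_relators_rel)] := all_ordsP check k.
Qed.

Lemma embed_schreier_label c x : peq FB7_rel (embed_AP4 (schreier_label c x))
  (coset_rep c ++ x :: word_inv (coset_rep (coset_act c x))).
Proof.
pose telescopes c x := eqb_FB7 (embed_AP4 (schreier_label c x))
  (coset_rep c ++ x :: word_inv (coset_rep (coset_act c x))).
have check : all (fun c : 'I_16 => all (fun i : 'I_6 =>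
  telescopes c (i, false) && telescopes c (i, true)) (ords 5)) (ords 15) by vm_compute.
apply: (word_eqb_peq FB7_relators_rel).
by case: x => i []; case/andP: (all_ordsP (all_ordsP check c) i).
Qed.

Theorem theorem1p6 : commensurable FB7_rel AP4_rel.
Proof.
apply: (@schreier_commensurable _ _ _ _ _ ord0 coset_act schreier_label coset_rep vertex_word).
- exact: coset_act_letter_inv.
- exact: schreier_label_letter_inv.
- exact: FB7_relator_loop.
- exact: embed_AP4_relator.
- by move=> k; case: (vertex_word_loop k).
- by move=> k; case: (vertex_word_loop k).
- exact: embed_schreier_label.
- by [].
Qed.
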